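(* Let $R$ be a ring with unity and involution $*$, and let $a,b,c\in R$. The following statements are equivalent. (1) $a$ is left dual $(b,c)$-core invertible. (2) $a$ is left $(b,c)$-invertible and $b$ is $\{1,4\}$-invertible. (3) $a$ is left $(b,c)$-invertible and $ab$ is $\{1,4\}$-invertible. (4) $a$ is left $(b,c)$-invertible and $cab$ is $\{1,4\}$-invertible. In this case, for any left $(b,c)$-inverse $a_l^{(b,c)}$ of $a$ and any $\{1,4\}$-inverses $b^{(1,4)}$, $(ab)^{(1,4)}$, $(cab)^{(1,4)}$ of $b$, $ab$, $cab$ respectively, each of the elements $b^{(1,4)}a_l^{(b,c)}$, $(ab)^{(1,4)}a\,a_l^{(b,c)}$ and $(cab)^{(1,4)}c$ is a left dual $(b,c)$-core inverse of $a$.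
   Context: An element $a\in R$ is called left dual $(b,c)$-core invertible if there exists $x\in Rc$ such that $bxab=b$ and $(xab)^*=xab$; such an $x$ is called a left dual $(b,c)$-core inverse of $a$. The element $a$ is left $(b,c)$-invertible if $b\in Rcab$, equivalently there exists $x\in Rc$ with $xab=b$; any such $x$ is a left $(b,c)$-inverse of $a$, denoted $a_l^{(b,c)}$. An element $y$ is $\{1,4\}$-invertible if there exists $z$ with $yzy=y$ and $(zy)^*=zy$; such $z$ is a $\{1,4\}$-inverse of $y$. *)

From mathcomp Require Import all_boot all_algebra.
Set Implicit Arguments. Unset Strict Implicit. Unset Printing Implicit Defensive.
Import GRing.Theory.
Local Open Scope ring_scope.

Definition involution (R : pzRingType) (star : R -> R) : Prop :=
  [/\ forall x y : R, star (x + y) = star x + star y,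
      forall x y : R, star (x * y) = star y * star x
    & forall x : R, star (star x) = x].

Definition left_dual_bc_core_inverse (R : pzRingType) (star : R -> R)
  (a b c x : R) : Prop :=
  (exists r : R, x = r * c) /\ b * x * a * b = b /\ star (x * a * b) = x * a * b.

Definition left_dual_bc_core_invertible (R : pzRingType) (star : R -> R)
  (a b c : R) : Prop :=
  exists x : R, left_dual_bc_core_inverse star a b c x.

Definition left_bc_invertible (R : pzRingType) (a b c : R) : Prop :=
  exists r : R, b = r * (c * a * b).

Definition left_bc_inverse (R : pzRingType) (a b c x : R) : Prop :=
  (exists r : R, x = r * c) /\ x * a * b = b.

Definition inv14 (R : pzRingType) (star : R -> R) (y z : R) : Prop :=
  y * z * y = y /\ star (z * y) = z * y.

Definition invertible14 (R : pzRingType) (star : R -> R) (y : R) : Prop :=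
  exists z : R, inv14 star y z.

From mathcomp Require Import all_boot all_algebra.
Local Open Scope ring_scope.
Import GRing.Theory.

(* Regrouping [b x a b] as [b (x a) b] shows that [x] is a left dual
   (b,c)-core inverse of [a] iff [x] lies in [R c] and [x a] is a
   {1,4}-inverse of [b].  Moreover, whenever [t (s y) = y], the element [z]
   is a {1,4}-inverse of [s y] iff [z s] is one of [y]; with [s = a] and
   [s = c a] this moves {1,4}-inverses between [b], [a b] and [c a b]. *)

Section LeftDualCoreInverse.

Local Set Implicit Arguments. Local Unset Strict Implicit.

Variables (R : pzRingType) (star : R -> R).

Lemma inv14_mulr_id (y z w : R) :
  w * y = y -> inv14 star y (z * w) <-> inv14 star y z.
Proof. by move=> wy; rewrite /inv14 -!mulrA wy. Qed.

Lemma inv14_mul_cancel (s t y z : R) :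
  t * (s * y) = y -> inv14 star (s * y) z <-> inv14 star y (z * s).
Proof.
move=> tsy; rewrite /inv14 -!mulrA; split=> -[yzy ->]; split=> //.
- by rewrite -{1}tsy -!mulrA yzy.
- by rewrite yzy.
Qed.

Variables a b c : R.

Lemma left_dual_bc_core_inverseE (x : R) :
  left_dual_bc_core_inverse star a b c x <->
  (exists r, x = r * c) /\ inv14 star b (x * a).
Proof. by rewrite /left_dual_bc_core_inverse /inv14 !mulrA. Qed.

Lemma left_bc_invertibleP :
  left_bc_invertible a b c <-> exists x, left_bc_inverse a b c x.
Proof.
split=> [[r rcab] | [_ [[r ->] rcab]]].
  by exists (r * c); split; [exists r | rewrite [in RHS]rcab !mulrA].
by exists r; rewrite !mulrA.
Qed.

Lemma left_dual_bc_core_invertible_left_bc_invertible :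
  left_dual_bc_core_invertible star a b c -> left_bc_invertible a b c.
Proof.
by move=> [x [[r ->] [bxab _]]]; exists (b * r); rewrite -[in LHS]bxab !mulrA.
Qed.

Section FromCoreInverse.

Variable x : R.
Hypothesis core_x : left_dual_bc_core_inverse star a b c x.

Lemma left_dual_bc_core_inverse_inv14 : invertible14 star b.
Proof. by case/left_dual_bc_core_inverseE: core_x => _ bxa; exists (x * a). Qed.

Lemma left_dual_bc_core_inverse_inv14_ab : invertible14 star (a * b).
Proof.
case/left_dual_bc_core_inverseE: core_x => _ bxa; exists x.
have bxab : b * x * (a * b) = b by case: bxa; rewrite !mulrA.
exact/(inv14_mul_cancel _ bxab).
Qed.

Lemma left_dual_bc_core_inverse_inv14_cab : invertible14 star (c * a * b).
Proof.
case/left_dual_bc_core_inverseE: core_x => -[r xE] bxa; exists r.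
have brcab : b * r * (c * a * b) = b by case: bxa; rewrite xE !mulrA.
by apply/(inv14_mul_cancel _ brcab); rewrite mulrA -xE.
Qed.

End FromCoreInverse.

Section ToCoreInverse.

Variable x : R.
Hypothesis left_inv_x : left_bc_inverse a b c x.

Lemma inv14_left_dual_bc_core_inverse (z : R) :
  inv14 star b z -> left_dual_bc_core_inverse star a b c (z * x).
Proof.
case: left_inv_x => -[r xE] xab bz; apply/left_dual_bc_core_inverseE.
split; first by exists (z * r); rewrite xE mulrA.
by rewrite -mulrA; apply/(inv14_mulr_id _ xab).
Qed.

Lemma inv14_ab_left_dual_bc_core_inverse (z : R) :
  inv14 star (a * b) z -> left_dual_bc_core_inverse star a b c (z * a * x).
Proof.
case: left_inv_x => -[r xE] xab abz; apply/left_dual_bc_core_inverseE.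
split; first by exists (z * a * r); rewrite xE mulrA.
rewrite -[z * a * x * a]mulrA; apply/(inv14_mulr_id _ xab).
by rewrite -mulrA in xab; exact/(inv14_mul_cancel _ xab).
Qed.

Lemma inv14_cab_left_dual_bc_core_inverse (z : R) :
  inv14 star (c * a * b) z -> left_dual_bc_core_inverse star a b c (z * c).
Proof.
case: left_inv_x => -[r xE] xab cabz; apply/left_dual_bc_core_inverseE.
split; first by exists z.
have rcab : r * (c * a * b) = b by rewrite !mulrA -xE.
by rewrite -mulrA; exact/(inv14_mul_cancel _ rcab).
Qed.

End ToCoreInverse.

End LeftDualCoreInverse.

Theorem theorem2p6 (R : pzRingType) (star : R -> R) (a b c : R) :
  involution star ->
  (left_dual_bc_core_invertible star a b c <->
     left_bc_invertible a b c /\ invertible14 star b) /\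
  (left_dual_bc_core_invertible star a b c <->
     left_bc_invertible a b c /\ invertible14 star (a * b)) /\
  (left_dual_bc_core_invertible star a b c <->
     left_bc_invertible a b c /\ invertible14 star (c * a * b)) /\
  (forall x : R, left_bc_inverse a b c x ->
     (forall z : R, inv14 star b z ->
        left_dual_bc_core_inverse star a b c (z * x)) /\
     (forall z : R, inv14 star (a * b) z ->
        left_dual_bc_core_inverse star a b c (z * a * x)) /\
     (forall z : R, inv14 star (c * a * b) z ->
        left_dual_bc_core_inverse star a b c (z * c))).
Proof.
move=> _.
have lbc := @left_dual_bc_core_invertible_left_bc_invertible R star a b c.
split; [|split; [|split]].
- split=> [[x cx] | [/left_bc_invertibleP [x lx] [z bz]]].
    by split; [apply: lbc; exists x | exact: left_dual_bc_core_inverse_inv14 cx].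
  by exists (z * x); exact: (inv14_left_dual_bc_core_inverse lx).
- split=> [[x cx] | [/left_bc_invertibleP [x lx] [z abz]]].
    by split; [apply: lbc; exists x | exact: left_dual_bc_core_inverse_inv14_ab cx].
  by exists (z * a * x); exact: (inv14_ab_left_dual_bc_core_inverse lx).
- split=> [[x cx] | [/left_bc_invertibleP [x lx] [z cabz]]].
    by split; [apply: lbc; exists x | exact: left_dual_bc_core_inverse_inv14_cab cx].
  by exists (z * c); exact: (inv14_cab_left_dual_bc_core_inverse lx).
- move=> x lx; split; [|split].
  + exact: inv14_left_dual_bc_core_inverse lx.
  + exact: inv14_ab_left_dual_bc_core_inverse lx.
  + exact: inv14_cab_left_dual_bc_core_inverse lx.
Qed.
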